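(* Let $V$ be countably infinite with a fixed bijection $\xi:V\to\mathbb N$. For every finite simple graph $H$ and every $G\in\mathscr{G}(V)$, the set $S(H,G)$ is a closed nonempty subset of $[0,1]$. For $H=K_2$ (a single edge), $S(K_2,G)$ is a closed subinterval $[a,b]$ of $[0,1]$ (possibly with $a=b$). Conversely, for every $0\le a\le b\le1$ there exists $G\in\mathscr{G}(V)$ with $S(K_2,G)=[a,b]$.
   Context: $K_V$ is the set of $2$-element subsets of $V$; $\mathscr{G}(V)$ is the set of simple graphs on $V$ identified with their edge sets. For $G\in\mathscr{G}(V)$ and $n\in\mathbb N$, $G_V[n]$ is the finite induced subgraph of $G$ on the vertices $\xi^{-1}(1),\dots,\xi^{-1}(n)$. For finite simple graphs $H$ and $F$, $\mathrm{ind}(H,F)$ is the number of injective maps $V(H)\to V(F)$ that are isomorphisms of $H$ onto the induced subgraph of $F$ on the image, and $t_{\mathrm{ind}}(H,F) := \mathrm{ind}(H,F)\,(|V(F)|-|V(H)|)!/|V(F)|!$ (taken to be $0$ if $|V(F)|<|V(H)|$). $S(H,G)$ is the set of subsequential limits (accumulation points) of the sequence $n\mapsto t_{\mathrm{ind}}(H,G_V[n])$. Note $t_{\mathrm{ind}}(K_2,F)$ equals the edge density $e(F):=|E(F)|/\binom{|V(F)|}{2}$. *)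

From Stdlib Require Import Reals Lra Arith List Bool.
From Stdlib Require Import Rtopology.
Import ListNotations.
Open Scope R_scope.

Definition simple_graph {W : Type} (E : W -> W -> bool) : Prop :=
  (forall u v, E u v = E v u) /\ (forall u, E u u = false).

(* A finite simple graph with vertex set {0,...,k-1}: only values of E on
   that set matter. *)
Definition finite_simple_graph (k : nat) (E : nat -> nat -> bool) : Prop :=
  (forall i j, (i < k)%nat -> (j < k)%nat -> E i j = E j i) /\
  (forall i, (i < k)%nat -> E i i = false).

Definition K2_edges (i j : nat) : bool :=
  ((i =? 0) && (j =? 1)) || ((i =? 1) && (j =? 0)).

(* all maps {0..k-1} -> {0..n-1}, as lists of length k *)
Fixpoint tuples (k n : nat) : list (list nat) :=
  match k with
  | O => [[]]
  | S k' => flat_map (fun l => map (fun x => x :: l) (seq 0 n)) (tuples k' n)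
  end.

Fixpoint nodupb (l : list nat) : bool :=
  match l with
  | [] => true
  | x :: r => negb (existsb (Nat.eqb x) r) && nodupb r
  end.

(* phi (as a list) is an isomorphism of H onto the induced subgraph of F on
   its image *)
Definition is_ind_emb (k : nat) (H : nat -> nat -> bool)
  (F : nat -> nat -> bool) (phi : list nat) : bool :=
  nodupb phi &&
  forallb (fun i => forallb (fun j =>
      (i =? j) || Bool.eqb (H i j) (F (nth i phi 0%nat) (nth j phi 0%nat)))
    (seq 0 k)) (seq 0 k).

Definition ind (k : nat) (H : nat -> nat -> bool) (n : nat)
  (F : nat -> nat -> bool) : nat :=
  length (filter (is_ind_emb k H F) (tuples k n)).

Definition t_ind (k : nat) (H : nat -> nat -> bool) (n : nat)
  (F : nat -> nat -> bool) : R :=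
  if (n <? k)%nat then 0
  else INR (ind k H n F) * INR (fact (n - k)) / INR (fact n).

(* G_V[n]: induced subgraph of G on xi^{-1}(0),...,xi^{-1}(n-1),
   with vertex xi^{-1}(i) relabelled i. *)
Definition G_sub {V : Type} (xiinv : nat -> V) (G : V -> V -> bool)
  (i j : nat) : bool := G (xiinv i) (xiinv j).

Definition S_set {V : Type} (xiinv : nat -> V) (k : nat)
  (H : nat -> nat -> bool) (G : V -> V -> bool) (x : R) : Prop :=
  forall eps, eps > 0 -> forall N : nat, exists n : nat, (n >= N)%nat /\
    Rabs (t_ind k H n (G_sub xiinv G) - x) < eps.

(* S(H, G) is the set of cluster points of a sequence in [0, 1] (t_ind is a
   fraction of the n!/(n-k)! injective maps), hence closed, nonempty by
   Bolzano-Weierstrass, and contained in [0, 1].  For K_2 the edge density e_n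
   satisfies (n+1) e_(n+1) = (n-1) e_n + 2 d_n / n, where d_n counts the
   neighbours of vertex n among the earlier ones; so consecutive densities
   differ by O(1/n) and the cluster points form an interval.  Conversely, join
   vertex n to all earlier vertices exactly when e_n is below a target that is
   b on the blocks [2^2^j, 2^2^(j+1)) with j even and a on the others.  The
   recursion keeps e_n within O(1/n) of [a, b], and since each block ends at
   the square of its start, e_n is within O(1/n) of the block's target at the
   end of every block. *)

From Pilot Require Import Defs.
From Stdlib Require Import Reals Rtopology.
From Stdlib Require Import Lra Lia List Arith Bool Classical FunctionalExtensionality.
Import ListNotations.
Open Scope R_scope.

Definition cluster_point (u : nat -> R) (x : R) : Prop :=
  forall eps, eps > 0 -> forall N : nat, exists n : nat, (n >= N)%nat /\ Rabs (u n - x) < eps.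

Section ClusterPoints.
Variable u : nat -> R.
Hypothesis u_bounds : forall n, 0 <= u n <= 1.

Lemma cluster_point_exists : exists x, cluster_point u x.
Proof.
  destruct (Bolzano_Weierstrass u (fun c => 0 <= c <= 1) (compact_P3 0 1) u_bounds) as [l Hl].
  exists l. intros eps He N.
  destruct (Hl (disc l (mkposreal eps He)) N) as [n [Hn Hdisc]].
  - exists (mkposreal eps He). now intros y Hy.
  - exists n. split; [lia | exact Hdisc].
Qed.

Lemma cluster_point_bounds x : cluster_point u x -> 0 <= x <= 1.
Proof.
  intros Hx. split; apply Rnot_lt_le; intros Hlt.
  - destruct (Hx (- x) ltac:(lra) 0%nat) as [n [_ Hn]].
    apply Rabs_def2 in Hn. specialize (u_bounds n). lra.
  - destruct (Hx (x - 1) ltac:(lra) 0%nat) as [n [_ Hn]].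
    apply Rabs_def2 in Hn. specialize (u_bounds n). lra.
Qed.

Lemma cluster_point_max : exists b, cluster_point u b /\ forall x, cluster_point u x -> x <= b.
Proof.
  destruct cluster_point_exists as [x0 Hx0].
  destruct (completeness (cluster_point u)) as [b [Hub Hlub]].
  { exists 1. intros y Hy. apply (cluster_point_bounds y Hy). }
  { now exists x0. }
  exists b. split; [|exact Hub].
  intros eps He N.
  assert (Hnear : exists y, cluster_point u y /\ b - eps / 2 < y).
  { apply NNPP. intros Hno. enough (b <= b - eps / 2) by lra.
    apply Hlub. intros y Hy. apply Rnot_lt_le. intros Hlt. apply Hno. now exists y. }
  destruct Hnear as [y [Hy Hby]]. assert (y <= b) by now apply Hub.
  destruct (Hy (eps / 2) ltac:(lra) N) as [n [Hn Hyn]].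
  exists n. split; [exact Hn|]. apply Rabs_def2 in Hyn. apply Rabs_def1; lra.
Qed.

End ClusterPoints.

Lemma closed_cluster_point u : closed_set (cluster_point u).
Proof.
  intros x Hx. unfold complementary in Hx.
  apply not_all_ex_not in Hx as [eps Hx]. apply imply_to_and in Hx as [He Hx].
  apply not_all_ex_not in Hx as [N HN].
  assert (Hfar : forall n, (n >= N)%nat -> Rabs (u n - x) >= eps).
  { intros n Hn. apply Rnot_lt_ge. intros Hlt. apply HN. now exists n. }
  exists (mkposreal (eps / 2) ltac:(lra)). intros y Hy Hcl. unfold disc in Hy; simpl in Hy.
  destruct (Hcl (eps / 2) ltac:(lra) N) as [n [Hn Hyn]].
  specialize (Hfar n Hn).
  assert (Rabs (u n - x) <= Rabs (u n - y) + Rabs (y - x)).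
  { replace (u n - x) with ((u n - y) + (y - x)) by ring. apply Rabs_triang. }
  lra.
Qed.

Lemma cluster_point_one_minus u x :
  cluster_point (fun n => 1 - u n) (1 - x) <-> cluster_point u x.
Proof.
  assert (Hdist : forall n, Rabs (1 - u n - (1 - x)) = Rabs (u n - x)).
  { intros n. rewrite <- Rabs_Ropp. f_equal. ring. }
  split; intros Hx eps He N; destruct (Hx eps He N) as [n [Hn Hxn]];
    exists n; rewrite ?Hdist in *; auto.
Qed.

(* The sequence can only cross from near [a] to near [b] in small steps, so it
   passes near every intermediate value infinitely often. *)
Lemma cluster_point_between u a b :
  (forall eps, eps > 0 -> exists N, forall n, (n >= N)%nat -> Rabs (u (S n) - u n) < eps) ->
  cluster_point u a -> cluster_point u b -> forall x, a <= x <= b -> cluster_point u x.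
Proof.
  intros Hsteps Ha Hb x Hx eps He N.
  destruct (Hsteps eps He) as [N' HN'].
  destruct (Ha eps He (Nat.max N N')) as [n1 [Hn1 H1]].
  destruct (Hb eps He n1) as [n2 [Hn2 H2]].
  apply Rabs_def2 in H1. apply Rabs_def2 in H2.
  destruct (Rlt_le_dec (x - eps) (u n1)) as [Hc|Hc].
  { exists n1. split; [lia|]. apply Rabs_def1; lra. }
  assert (Hwalk : forall m, (exists n, (n1 <= n <= n1 + m)%nat /\ Rabs (u n - x) < eps)
                            \/ u (n1 + m)%nat <= x - eps).
  { induction m as [|m [[n [Hn Hxn]]|Hbelow]].
    - right. now rewrite Nat.add_0_r.
    - left. exists n. split; [lia | exact Hxn].
    - destruct (Rle_lt_dec (u (n1 + S m)%nat) (x - eps)) as [Hd|Hd]; [now right|].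
      left. exists (n1 + S m)%nat. split; [lia|].
      assert (Hs := HN' (n1 + m)%nat ltac:(lia)).
      rewrite <- Nat.add_succ_r in Hs. apply Rabs_def2 in Hs. apply Rabs_def1; lra. }
  destruct (Hwalk (n2 - n1)%nat) as [[n [Hn Hxn]]|Hd].
  - exists n. split; [lia | exact Hxn].
  - replace (n1 + (n2 - n1))%nat with n2 in Hd by lia. lra.
Qed.

Lemma cluster_points_interval u :
  (forall n, 0 <= u n <= 1) ->
  (forall eps, eps > 0 -> exists N, forall n, (n >= N)%nat -> Rabs (u (S n) - u n) < eps) ->
  exists a b, 0 <= a <= b /\ b <= 1 /\ forall x, cluster_point u x <-> a <= x <= b.
Proof.
  intros Hu Hsteps.
  destruct (cluster_point_max u Hu) as [b [Hb Hmax]].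
  assert (Hu' : forall n, 0 <= 1 - u n <= 1) by (intros n; specialize (Hu n); lra).
  destruct (cluster_point_max _ Hu') as [b' [Hb' Hmax']].
  assert (Hlow : cluster_point u (1 - b')).
  { apply cluster_point_one_minus. now replace (1 - (1 - b')) with b' by ring. }
  assert (Hmin : forall x, cluster_point u x -> 1 - b' <= x).
  { intros x Hx. apply cluster_point_one_minus in Hx. specialize (Hmax' _ Hx). lra. }
  exists (1 - b'), b.
  pose proof (cluster_point_bounds u Hu _ Hb). pose proof (cluster_point_bounds u Hu _ Hlow).
  pose proof (Hmax _ Hlow).
  split; [lra|]. split; [lra|]. intros x. split.
  - intros Hx. split; [now apply Hmin | now apply Hmax].
  - now apply (cluster_point_between u (1 - b') b Hsteps Hlow Hb).
Qed.

Lemma length_filter_mono {A} (f g : A -> bool) l :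
  (forall x, f x = true -> g x = true) -> (length (filter f l) <= length (filter g l))%nat.
Proof.
  intros Hfg. induction l as [|x l IH]; simpl; [lia|].
  destruct (f x) eqn:Hf; [rewrite (Hfg x Hf)|destruct (g x)]; simpl; lia.
Qed.

Lemma length_filter_map {A B} (f : B -> bool) (h : A -> B) l :
  length (filter f (map h l)) = length (filter (fun x => f (h x)) l).
Proof. induction l as [|x l IH]; simpl; [|destruct (f (h x)); simpl]; auto. Qed.

Lemma In_tuples k n l : In l (tuples k n) -> length l = k /\ Forall (fun x => (x < n)%nat) l.
Proof.
  revert l. induction k as [|k IH]; intros l Hl; simpl in Hl.
  - destruct Hl as [<-|[]]. auto.
  - apply in_flat_map in Hl as [l' [Hl' Hin]].
    apply in_map_iff in Hin as [x [<- Hx]]. apply in_seq in Hx.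
    destruct (IH l' Hl'). simpl. split; auto. constructor; auto; lia.
Qed.

Lemma nodupb_NoDup l : nodupb l = true -> NoDup l.
Proof.
  induction l as [|x l IH]; simpl; intros Hl; constructor;
    apply andb_prop in Hl as [Hx Hl]; auto.
  intros Hin. enough (existsb (Nat.eqb x) l = true) as E by (rewrite E in Hx; discriminate).
  apply existsb_exists. exists x. split; auto. apply Nat.eqb_refl.
Qed.

Definition nodup_tuples_count (k n : nat) : nat := length (filter nodupb (tuples k n)).

Lemma nodup_extensions_count l n :
  NoDup l -> Forall (fun x => (x < n)%nat) l ->
  (length (filter (fun x => nodupb (x :: l)) (seq 0 n)) <= n - length l)%nat.
Proof.
  intros Hnd Hlt.
  assert (Hin : (length l <= length (filter (fun x => existsb (Nat.eqb x) l) (seq 0 n)))%nat).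
  { apply NoDup_incl_length; auto. intros x Hx. apply filter_In. split.
    - apply in_seq. rewrite Forall_forall in Hlt. specialize (Hlt x Hx). lia.
    - apply existsb_exists. exists x. split; auto. apply Nat.eqb_refl. }
  pose proof (filter_length (fun x => existsb (Nat.eqb x) l) (seq 0 n)) as Hsplit.
  rewrite length_seq in Hsplit.
  enough (length (filter (fun x => nodupb (x :: l)) (seq 0 n)) <=
          length (filter (fun x => negb (existsb (Nat.eqb x) l)) (seq 0 n)))%nat by lia.
  apply length_filter_mono. intros x. simpl. now destruct (negb _).
Qed.

Lemma nodup_tuples_count_succ k n :
  (nodup_tuples_count (S k) n <= nodup_tuples_count k n * (n - k))%nat.
Proof.
  unfold nodup_tuples_count. simpl.
  assert (Hspec := In_tuples k n).
  induction (tuples k n) as [|l L IH]; simpl; [lia|].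
  rewrite filter_app, length_app, length_filter_map.
  specialize (IH (fun l' H => Hspec l' (or_intror H))).
  destruct (Hspec l (or_introl eq_refl)) as [Hlen Hlt].
  destruct (nodupb l) eqn:Hl; simpl.
  - pose proof (nodup_extensions_count l n (nodupb_NoDup l Hl) Hlt). subst k. simpl in *. lia.
  - rewrite (filter_ext _ (fun _ => false)) by (intros x; simpl; now rewrite Hl, andb_false_r).
    rewrite filter_false. simpl. lia.
Qed.

Lemma nodup_tuples_count_fact k n :
  (k <= n)%nat -> (nodup_tuples_count k n * fact (n - k) <= fact n)%nat.
Proof.
  induction k as [|k IH]; intros Hk.
  - unfold nodup_tuples_count. simpl. rewrite Nat.sub_0_r. lia.
  - specialize (IH ltac:(lia)).
    replace (n - k)%nat with (S (n - S k)) in IH by lia. simpl fact in IH.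
    pose proof (nodup_tuples_count_succ k n) as Hsucc.
    replace (n - k)%nat with (S (n - S k)) in Hsucc by lia.
    apply (Nat.le_trans _ (nodup_tuples_count k n * S (n - S k) * fact (n - S k))); [|lia].
    now apply Nat.mul_le_mono_r.
Qed.

Lemma t_ind_bounds k H n F : 0 <= t_ind k H n F <= 1.
Proof.
  unfold t_ind. destruct (n <? k)%nat eqn:Hnk; [lra|]. apply Nat.ltb_ge in Hnk.
  assert (Hle : (Defs.ind k H n F * fact (n - k) <= fact n)%nat).
  { apply (Nat.le_trans _ (nodup_tuples_count k n * fact (n - k))).
    - apply Nat.mul_le_mono_r, length_filter_mono.
      intros phi Hphi. now apply andb_prop in Hphi as [Hphi _].
    - now apply nodup_tuples_count_fact. }
  apply le_INR in Hle. rewrite mult_INR in Hle.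
  pose proof (INR_fact_lt_0 n). pose proof (INR_fact_lt_0 (n - k)). pose proof (pos_INR (Defs.ind k H n F)).
  split.
  - apply Rmult_le_pos; [apply Rmult_le_pos; lra|]. left. now apply Rinv_0_lt_compat.
  - apply Rmult_le_reg_r with (INR (fact n)); auto. unfold Rdiv.
    rewrite Rmult_assoc, Rinv_l; lra.
Qed.

Fixpoint sum_to (f : nat -> nat) (n : nat) : nat :=
  match n with O => O | S m => (sum_to f m + f m)%nat end.

Lemma sum_to_ext f g n : (forall i, (i < n)%nat -> f i = g i) -> sum_to f n = sum_to g n.
Proof. induction n; simpl; intros Hfg; auto. rewrite IHn, Hfg; auto. Qed.

Lemma sum_to_add f g n : sum_to (fun i => f i + g i)%nat n = (sum_to f n + sum_to g n)%nat.
Proof. induction n; simpl; lia. Qed.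

Lemma sum_to_const c n : sum_to (fun _ => c) n = (n * c)%nat.
Proof. induction n; simpl; lia. Qed.

Lemma sum_to_le_const f n c : (forall i, (i < n)%nat -> (f i <= c)%nat) -> (sum_to f n <= n * c)%nat.
Proof.
  intros Hf. rewrite <- sum_to_const. induction n as [|n IH]; simpl; [lia|].
  pose proof (Hf n ltac:(lia)). enough (sum_to f n <= sum_to (fun _ => c) n)%nat by lia.
  apply IH. intros i Hi. apply Hf. lia.
Qed.

Lemma list_sum_map_seq f n : list_sum (map f (seq 0 n)) = sum_to f n.
Proof. induction n; auto. rewrite seq_S, map_app, list_sum_app. simpl. rewrite IHn. lia. Qed.

Lemma length_filter_flat_map {A B} (f : B -> bool) (g : A -> list B) l :
  length (filter f (flat_map g l)) = list_sum (map (fun a => length (filter f (g a))) l).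
Proof. induction l; simpl; auto. rewrite filter_app, length_app. lia. Qed.

Lemma length_filter_seq f n : length (filter f (seq 0 n)) = sum_to (fun x => Nat.b2n (f x)) n.
Proof.
  rewrite <- list_sum_map_seq. induction (seq 0 n) as [|x s IH]; simpl; auto.
  destruct (f x); simpl; lia.
Qed.

(* The embeddings of K_2 are ordered pairs: twice the number of edges. *)
Definition adjacent_pair (F : nat -> nat -> bool) x y : bool :=
  negb (x =? y)%nat && F x y && F y x.

Definition adjacent_pairs (n : nat) (F : nat -> nat -> bool) : nat :=
  sum_to (fun y => sum_to (fun x => Nat.b2n (adjacent_pair F x y)) n) n.

Definition back_degree (n : nat) (F : nat -> nat -> bool) : nat :=
  sum_to (fun x => Nat.b2n (F n x && F x n)) n.

Lemma is_ind_emb_K2 F x y : is_ind_emb 2 K2_edges F [x; y] = adjacent_pair F x y.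
Proof.
  unfold is_ind_emb, adjacent_pair. simpl. now destruct (x =? y)%nat, (F x y), (F y x).
Qed.

Lemma ind_K2 n F : Defs.ind 2 K2_edges n F = adjacent_pairs n F.
Proof.
  unfold Defs.ind. simpl. rewrite app_nil_r, length_filter_flat_map, map_map, list_sum_map_seq.
  apply sum_to_ext. intros y _.
  rewrite length_filter_map, length_filter_seq. apply sum_to_ext. intros x _.
  now rewrite is_ind_emb_K2.
Qed.

Lemma adjacent_pairs_succ n F :
  adjacent_pairs (S n) F = (adjacent_pairs n F + 2 * back_degree n F)%nat.
Proof.
  unfold adjacent_pairs, back_degree. simpl. rewrite sum_to_add.
  assert (Hrow : sum_to (fun y => Nat.b2n (adjacent_pair F n y)) n = back_degree n F).
  { apply sum_to_ext. intros y Hy. unfold adjacent_pair.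
    now replace (n =? y)%nat with false by (symmetry; apply Nat.eqb_neq; lia). }
  assert (Hcol : sum_to (fun x => Nat.b2n (adjacent_pair F x n)) n = back_degree n F).
  { apply sum_to_ext. intros x Hx. unfold adjacent_pair.
    replace (x =? n)%nat with false by (symmetry; apply Nat.eqb_neq; lia).
    now destruct (F x n), (F n x). }
  unfold back_degree in Hrow, Hcol. rewrite Hrow, Hcol.
  unfold adjacent_pair. rewrite Nat.eqb_refl. simpl. lia.
Qed.

Lemma back_degree_le n F : (back_degree n F <= n)%nat.
Proof.
  rewrite <- (Nat.mul_1_r n) at 2. apply sum_to_le_const. intros i _.
  destruct (F n i && F i n); simpl; lia.
Qed.

Lemma INR_ge_2 n : (2 <= n)%nat -> 2 <= INR n.
Proof. intros Hn. apply le_INR in Hn. now simpl in Hn. Qed.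

Lemma t_ind_K2 n F : (2 <= n)%nat ->
  t_ind 2 K2_edges n F = INR (adjacent_pairs n F) / (INR n * INR (n - 1)).
Proof.
  intros Hn. unfold t_ind. replace (n <? 2)%nat with false by (symmetry; apply Nat.ltb_ge; lia).
  rewrite ind_K2. destruct n as [|[|m]]; try lia.
  replace (S (S m) - 2)%nat with m by lia. replace (S (S m) - 1)%nat with (S m) by lia.
  change (fact (S (S m))) with (S (S m) * (S m * fact m))%nat.
  rewrite !mult_INR. pose proof (INR_fact_neq_0 m). pose proof (pos_INR m).
  rewrite !S_INR. field. lra.
Qed.

Lemma t_ind_K2_succ n F : (2 <= n)%nat ->
  (INR n + 1) * t_ind 2 K2_edges (S n) F =
  (INR n - 1) * t_ind 2 K2_edges n F + 2 * INR (back_degree n F) / INR n.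
Proof.
  intros Hn. rewrite !t_ind_K2 by lia. rewrite adjacent_pairs_succ.
  replace (S n - 1)%nat with n by lia.
  rewrite plus_INR, mult_INR, minus_INR, (S_INR n) by lia.
  rewrite INR_1. replace (INR 2) with 2 by (simpl; lra).
  pose proof (INR_ge_2 n Hn). field. lra.
Qed.

Lemma t_ind_K2_step_le n F : (2 <= n)%nat ->
  Rabs (t_ind 2 K2_edges (S n) F - t_ind 2 K2_edges n F) <= 2 / (INR n + 1).
Proof.
  intros Hn. pose proof (t_ind_K2_succ n F Hn) as Hsucc.
  pose proof (INR_ge_2 n Hn). pose proof (t_ind_bounds 2 K2_edges n F).
  assert (Hdeg : 0 <= INR (back_degree n F) / INR n <= 1).
  { pose proof (le_INR _ _ (back_degree_le n F)). pose proof (pos_INR (back_degree n F)).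
    split; [apply Rmult_le_pos; [lra | left; apply Rinv_0_lt_compat; lra]|].
    apply Rmult_le_reg_r with (INR n); [lra|]. unfold Rdiv. rewrite Rmult_assoc, Rinv_l; lra. }
  set (d := INR (back_degree n F) / INR n) in *.
  set (u := t_ind 2 K2_edges n F) in *. set (u' := t_ind 2 K2_edges (S n) F) in *.
  assert (Hdiff : (INR n + 1) * (u' - u) = 2 * (d - u)).
  { unfold d. rewrite Rmult_minus_distr_l, Hsucc. field. lra. }
  replace (u' - u) with (2 * (d - u) / (INR n + 1)) by (rewrite <- Hdiff; field; lra).
  unfold Rdiv. rewrite Rabs_mult, Rabs_inv, (Rabs_right (INR n + 1)) by lra.
  apply Rmult_le_compat_r; [left; apply Rinv_0_lt_compat; lra|]. apply Rabs_le. lra.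
Qed.

Lemma INR_eventually_gt c eps : eps > 0 -> exists N : nat, (2 <= N)%nat /\
  forall n, (n >= N)%nat -> c < (INR n - 1) * eps.
Proof.
  intros He. destruct (INR_unbounded (c / eps + 1)) as [N HN].
  exists (Nat.max N 2). split; [lia|]. intros n Hn.
  assert (INR N <= INR n) by (apply le_INR; lia).
  assert (Hlt : c / eps < INR n - 1) by lra.
  apply (Rmult_lt_compat_r eps) in Hlt; auto.
  unfold Rdiv in Hlt. rewrite Rmult_assoc, Rinv_l in Hlt by lra. lra.
Qed.

Lemma t_ind_K2_steps_vanish F : forall eps, eps > 0 -> exists N, forall n, (n >= N)%nat ->
  Rabs (t_ind 2 K2_edges (S n) F - t_ind 2 K2_edges n F) < eps.
Proof.
  intros eps He. destruct (INR_eventually_gt 2 eps He) as [N [HN Hbig]].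
  exists N. intros n Hn. eapply Rle_lt_trans; [apply t_ind_K2_step_le; lia|].
  specialize (Hbig n Hn). pose proof (INR_ge_2 n ltac:(lia)).
  apply Rmult_lt_reg_r with (INR n + 1); [lra|]. unfold Rdiv.
  rewrite Rmult_assoc, Rinv_l by lra. nra.
Qed.

Lemma cluster_point_ge u c C x :
  (forall n, (2 <= n)%nat -> (INR n - 1) * (c - u n) <= C) -> cluster_point u x -> c <= x.
Proof.
  intros Hgap Hx. apply Rnot_lt_le. intros Hlt.
  destruct (INR_eventually_gt C ((c - x) / 2) ltac:(lra)) as [N [HN Hbig]].
  destruct (Hx ((c - x) / 2) ltac:(lra) N) as [n [Hn Hxn]].
  specialize (Hbig n Hn). specialize (Hgap n ltac:(lia)). pose proof (INR_ge_2 n ltac:(lia)).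
  apply Rabs_def2 in Hxn. nra.
Qed.

Lemma cluster_point_le u c C x :
  (forall n, (2 <= n)%nat -> (INR n - 1) * (u n - c) <= C) -> cluster_point u x -> x <= c.
Proof.
  intros Hgap Hx. apply cluster_point_one_minus in Hx.
  enough (1 - c <= 1 - x) by lra.
  apply (cluster_point_ge (fun n => 1 - u n) _ C _); [|exact Hx].
  intros n Hn. replace (1 - c - (1 - u n)) with (u n - c) by ring. now apply Hgap.
Qed.

Lemma cluster_point_of_gaps u c C :
  (forall N, exists n, (N <= n)%nat /\ (2 <= n)%nat /\ (INR n - 1) * Rabs (u n - c) <= C) ->
  cluster_point u c.
Proof.
  intros Hgaps eps He N.
  destruct (INR_eventually_gt C eps He) as [N' [_ Hbig]].
  destruct (Hgaps (Nat.max N N')) as [n [Hn [Hn2 Hgap]]].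
  exists n. split; [lia|]. specialize (Hbig n ltac:(lia)). pose proof (INR_ge_2 n Hn2).
  apply Rmult_lt_reg_l with (INR n - 1); lra.
Qed.

(* Multiplied by n, each step says that n (n-1) y n does not increase, except
   where it is reset to at most 2 n. *)
Lemma weighted_gap_bound (y : nat -> R) s m :
  (2 <= s <= m)%nat -> y s <= 1 ->
  (forall n, (s <= n < m)%nat ->
     (INR n + 1) * y (S n) <= (INR n - 1) * y n \/ (INR n + 1) * y (S n) <= 2) ->
  INR m * (INR m - 1) * y m <= INR s * (INR s - 1) + 2 * INR m.
Proof.
  intros Hsm Hys. induction m as [|m IH]; intros Hstep; [lia|].
  pose proof (INR_ge_2 s ltac:(lia)).
  destruct (Nat.eq_dec s (S m)) as [<-|Hne].
  { assert (0 <= INR s * (INR s - 1)) by nra.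
    assert (INR s * (INR s - 1) * y s <= INR s * (INR s - 1) * 1)
      by (apply Rmult_le_compat_l; lra).
    lra. }
  specialize (IH ltac:(lia) ltac:(intros n Hn; apply Hstep; lia)).
  pose proof (INR_ge_2 m ltac:(lia)).
  rewrite S_INR. destruct (Hstep m ltac:(lia)) as [Hdec|Hcap].
  - assert (INR m * ((INR m + 1) * y (S m)) <= INR m * ((INR m - 1) * y m))
      by (apply Rmult_le_compat_l; lra).
    nra.
  - assert (INR m * ((INR m + 1) * y (S m)) <= INR m * 2) by (apply Rmult_le_compat_l; lra).
    nra.
Qed.

Lemma log2_log2_block j n :
  (2 ^ (2 ^ j) <= n < 2 ^ (2 ^ j) * 2 ^ (2 ^ j))%nat -> Nat.log2 (Nat.log2 n) = j.
Proof.
  intros [Hlo Hhi].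
  rewrite <- Nat.pow_add_r in Hhi.
  replace (2 ^ j + 2 ^ j)%nat with (2 ^ S j)%nat in Hhi by (simpl; lia).
  assert (Hpos : (0 < 2 ^ (2 ^ j))%nat) by (apply Nat.neq_0_lt_0, Nat.pow_nonzero; lia).
  assert (2 ^ j <= Nat.log2 n)%nat by (apply (Nat.log2_le_pow2 n (2 ^ j)); lia).
  assert (Nat.log2 n < 2 ^ S j)%nat by (apply (Nat.log2_lt_pow2 n (2 ^ S j)); lia).
  apply Nat.log2_unique; lia.
Qed.

Lemma double_exp_bounds j : (j < 2 ^ (2 ^ j))%nat /\ (2 <= 2 ^ (2 ^ j))%nat.
Proof.
  pose proof (Nat.pow_gt_lin_r 2 j ltac:(lia)).
  pose proof (Nat.pow_gt_lin_r 2 (2 ^ j) ltac:(lia)).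
  assert (2 ^ 1 <= 2 ^ (2 ^ j))%nat by (apply Nat.pow_le_mono_r; lia).
  simpl in *. lia.
Qed.

Section Greedy.
Variables a b : R.

Definition target (n : nat) : R := if Nat.even (Nat.log2 (Nat.log2 n)) then b else a.

Definition edge_density (n e : nat) : R := 2 * INR e / (INR n * INR (n - 1)).

Fixpoint greedy_edges (n : nat) : nat :=
  match n with
  | O => O
  | S m => (greedy_edges m +
            if Rlt_dec (edge_density m (greedy_edges m)) (target m) then m else 0)%nat
  end.

Definition greedy_joins (m : nat) : bool :=
  if Rlt_dec (edge_density m (greedy_edges m)) (target m) then true else false.

Definition greedy_graph (i j : nat) : bool :=
  if (i <? j)%nat then greedy_joins j else if (j <? i)%nat then greedy_joins i else false.

Definition greedy_density (n : nat) : R := t_ind 2 K2_edges n greedy_graph.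

Lemma greedy_graph_sym i j : greedy_graph i j = greedy_graph j i.
Proof.
  unfold greedy_graph. destruct (i <? j)%nat eqn:Hij, (j <? i)%nat eqn:Hji; auto.
  apply Nat.ltb_lt in Hij, Hji. lia.
Qed.

Lemma greedy_graph_irrefl i : greedy_graph i i = false.
Proof. unfold greedy_graph. now rewrite Nat.ltb_irrefl. Qed.

Lemma back_degree_greedy n : back_degree n greedy_graph = if greedy_joins n then n else 0%nat.
Proof.
  unfold back_degree. rewrite (sum_to_ext _ (fun _ => Nat.b2n (greedy_joins n))).
  - rewrite sum_to_const. destruct (greedy_joins n); simpl; lia.
  - intros i Hi. unfold greedy_graph.
    replace (n <? i)%nat with false by (symmetry; apply Nat.ltb_ge; lia).
    replace (i <? n)%nat with true by (symmetry; apply Nat.ltb_lt; lia).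
    now rewrite andb_diag.
Qed.

Lemma adjacent_pairs_greedy n : adjacent_pairs n greedy_graph = (2 * greedy_edges n)%nat.
Proof.
  induction n as [|n IH]; [reflexivity|].
  rewrite adjacent_pairs_succ, IH, back_degree_greedy. simpl greedy_edges. unfold greedy_joins.
  destruct (Rlt_dec _ _); lia.
Qed.

Lemma greedy_density_edges n : (2 <= n)%nat -> greedy_density n = edge_density n (greedy_edges n).
Proof.
  intros Hn. unfold greedy_density, edge_density.
  rewrite t_ind_K2, adjacent_pairs_greedy, mult_INR by auto. simpl (INR 2). lra.
Qed.

Lemma greedy_density_succ n : (2 <= n)%nat ->
  (INR n + 1) * greedy_density (S n) =
  (INR n - 1) * greedy_density n +
  2 * (if Rlt_dec (greedy_density n) (target n) then 1 else 0).
Proof.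
  intros Hn. unfold greedy_density at 1 2.
  rewrite t_ind_K2_succ, back_degree_greedy by auto.
  fold (greedy_density n). rewrite (greedy_density_edges n Hn). unfold greedy_joins.
  pose proof (INR_ge_2 n Hn).
  destruct (Rlt_dec _ _); [field; lra | simpl; lra].
Qed.

Lemma greedy_density_bounds n : 0 <= greedy_density n <= 1.
Proof. apply t_ind_bounds. Qed.

Lemma greedy_gap_below s m c :
  (2 <= s <= m)%nat -> (s * s <= 2 * m)%nat -> 0 <= c <= 1 ->
  (forall n, (s <= n < m)%nat -> c <= target n) ->
  (INR m - 1) * (c - greedy_density m) <= 4.
Proof.
  intros Hsm Hs Hc Htarget.
  assert (Hbound := weighted_gap_bound (fun n => c - greedy_density n) s m Hsm).
  simpl in Hbound.
  pose proof (greedy_density_bounds s).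
  assert (Hsteps : forall n, (s <= n < m)%nat ->
    (INR n + 1) * (c - greedy_density (S n)) <= (INR n - 1) * (c - greedy_density n) \/
    (INR n + 1) * (c - greedy_density (S n)) <= 2).
  { intros n Hn. pose proof (greedy_density_succ n ltac:(lia)). pose proof (Htarget n Hn).
    pose proof (INR_ge_2 n ltac:(lia)). pose proof (greedy_density_bounds n).
    destruct (Rlt_dec (greedy_density n) (target n)); [left | right]; nra. }
  specialize (Hbound ltac:(lra) Hsteps).
  apply le_INR in Hs. rewrite !mult_INR in Hs. simpl (INR 2) in Hs.
  pose proof (INR_ge_2 s ltac:(lia)). pose proof (INR_ge_2 m ltac:(lia)). nra.
Qed.

Lemma greedy_gap_above s m c :
  (2 <= s <= m)%nat -> (s * s <= 2 * m)%nat -> 0 <= c <= 1 ->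
  (forall n, (s <= n < m)%nat -> target n <= c) ->
  (INR m - 1) * (greedy_density m - c) <= 4.
Proof.
  intros Hsm Hs Hc Htarget.
  assert (Hbound := weighted_gap_bound (fun n => greedy_density n - c) s m Hsm).
  simpl in Hbound.
  pose proof (greedy_density_bounds s).
  assert (Hsteps : forall n, (s <= n < m)%nat ->
    (INR n + 1) * (greedy_density (S n) - c) <= (INR n - 1) * (greedy_density n - c) \/
    (INR n + 1) * (greedy_density (S n) - c) <= 2).
  { intros n Hn. pose proof (greedy_density_succ n ltac:(lia)). pose proof (Htarget n Hn).
    pose proof (INR_ge_2 n ltac:(lia)). pose proof (greedy_density_bounds n).
    destruct (Rlt_dec (greedy_density n) (target n)); [right | left]; nra. }
  specialize (Hbound ltac:(lra) Hsteps).
  apply le_INR in Hs. rewrite !mult_INR in Hs. simpl (INR 2) in Hs.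
  pose proof (INR_ge_2 s ltac:(lia)). pose proof (INR_ge_2 m ltac:(lia)). nra.
Qed.

Hypothesis ab_bounds : 0 <= a <= b.
Hypothesis b_le_1 : b <= 1.

Lemma target_bounds n : a <= target n <= b.
Proof. unfold target. destruct (Nat.even _); lra. Qed.

Lemma greedy_density_block_end j :
  let s := (2 ^ (2 ^ j))%nat in
  (INR (s * s) - 1) * Rabs (greedy_density (s * s) - if Nat.even j then b else a) <= 4.
Proof.
  intros s. destruct (double_exp_bounds j) as [_ Hs].
  assert (Hblock : forall n, (s <= n < s * s)%nat -> target n = if Nat.even j then b else a).
  { intros n Hn. unfold target. now rewrite (log2_log2_block j n Hn). }
  assert (Hc : 0 <= (if Nat.even j then b else a) <= 1) by (destruct (Nat.even j); lra).
  assert (Hsm : (2 <= s <= s * s)%nat) by nia.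
  pose proof (greedy_gap_below s (s * s) _ Hsm ltac:(lia) Hc
                (fun n Hn => Req_le _ _ (eq_sym (Hblock n Hn)))).
  pose proof (greedy_gap_above s (s * s) _ Hsm ltac:(lia) Hc
                (fun n Hn => Req_le _ _ (Hblock n Hn))).
  unfold Rabs. destruct (Rcase_abs _); lra.
Qed.

Lemma cluster_point_greedy_target (even : bool) :
  cluster_point greedy_density (if even then b else a).
Proof.
  apply (cluster_point_of_gaps _ _ 4). intros N.
  set (j := if even then (2 * N)%nat else S (2 * N)).
  assert (Hj : Nat.even j = even).
  { unfold j. destruct even; [|rewrite Nat.even_succ, <- Nat.negb_even, negb_false_iff];
      apply Nat.even_spec; now exists N. }
  destruct (double_exp_bounds j) as [Hjs Hs].
  exists (2 ^ (2 ^ j) * 2 ^ (2 ^ j))%nat. split; [unfold j in *; destruct even; nia|].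
  split; [nia|]. pose proof (greedy_density_block_end j). now rewrite Hj in *.
Qed.

Lemma cluster_point_greedy x : cluster_point greedy_density x <-> a <= x <= b.
Proof.
  split.
  - intros Hx. split.
    + apply (cluster_point_ge greedy_density a 4 x); [|exact Hx]. intros n Hn.
      apply (greedy_gap_below 2 n); try lia; [lra|]. intros k _. apply target_bounds.
    + apply (cluster_point_le greedy_density b 4 x); [|exact Hx]. intros n Hn.
      apply (greedy_gap_above 2 n); try lia; [lra|]. intros k _. apply target_bounds.
  - apply cluster_point_between.
    + apply t_ind_K2_steps_vanish.
    + apply (cluster_point_greedy_target false).
    + apply (cluster_point_greedy_target true).
Qed.

End Greedy.

Lemma S_set_cluster_point {V : Type} (xiinv : nat -> V) k H G :
  S_set xiinv k H G = cluster_point (fun n => t_ind k H n (G_sub xiinv G)).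
Proof. reflexivity. Qed.

Theorem theorem4p1 (V : Type) (xi : V -> nat) (xiinv : nat -> V)
  (Hxi1 : forall v, xiinv (xi v) = v) (Hxi2 : forall n, xi (xiinv n) = n) :
  (forall (k : nat) (H : nat -> nat -> bool) (G : V -> V -> bool),
      finite_simple_graph k H -> simple_graph G ->
      closed_set (S_set xiinv k H G) /\
      (exists x, S_set xiinv k H G x) /\
      (forall x, S_set xiinv k H G x -> 0 <= x <= 1)) /\
  (forall G : V -> V -> bool, simple_graph G ->
      exists a b, 0 <= a <= b /\ b <= 1 /\
        forall x, S_set xiinv 2 K2_edges G x <-> a <= x <= b) /\
  (forall a b : R, 0 <= a <= b -> b <= 1 ->
      exists G : V -> V -> bool, simple_graph G /\
        forall x, S_set xiinv 2 K2_edges G x <-> a <= x <= b).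
Proof.
  split; [|split].
  - intros k H G _ _. rewrite S_set_cluster_point.
    pose proof (fun n => t_ind_bounds k H n (G_sub xiinv G)) as Hbounds.
    split; [apply closed_cluster_point|].
    split; [now apply cluster_point_exists | now apply cluster_point_bounds].
  - intros G _. rewrite S_set_cluster_point.
    apply cluster_points_interval; [intros n; apply t_ind_bounds | apply t_ind_K2_steps_vanish].
  - intros a b Hab Hb.
    exists (fun u v => greedy_graph a b (xi u) (xi v)). split.
    + split; intros; [apply greedy_graph_sym | apply greedy_graph_irrefl].
    + assert (Hsub : G_sub xiinv (fun u v => greedy_graph a b (xi u) (xi v)) = greedy_graph a b).
      { apply functional_extensionality; intros i. apply functional_extensionality; intros j.
        unfold G_sub. now rewrite !Hxi2. }
      rewrite S_set_cluster_point, Hsub. now apply cluster_point_greedy.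
Qed.
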